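(* Let $a,b,c$ be positive numbers with $a<b<c$ and $b-a<c_0<a$, where $c_0=c-\lfloor c/b\rfloor b$. Then: (i) $R_{a,b,c}\mathcal D_{a,b,c}=\tilde R_{a,b,c}\mathcal D_{a,b,c}=\mathcal D_{a,b,c}$ and $R_{a,b,c}\mathcal S_{a,b,c}=\tilde R_{a,b,c}\mathcal S_{a,b,c}=\mathcal S_{a,b,c}$; (ii) $R_{a,b,c}(\tilde R_{a,b,c}(t))=\tilde R_{a,b,c}(R_{a,b,c}(t))=t$ for all $t\in\mathcal S_{a,b,c}$ (in particular for all $t\in\mathcal D_{a,b,c}$); (iii) $|R_{a,b,c}(E)|=|\tilde R_{a,b,c}(E)|=|E|$ for every Lebesgue measurable set $E\subset\mathcal S_{a,b,c}$ (in particular for every measurable $E\subset\mathcal D_{a,b,c}$), where $|\cdot|$ is Lebesgue measure.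
   Context: For $a,b,c>0$ and $t\in\mathbb R$, $\mathbf M_{a,b,c}(t)=(\chi_{[0,c)}(t-\mu+\lambda))_{\mu\in a\mathbb Z,\lambda\in b\mathbb Z}$ is the infinite matrix with rows indexed by $a\mathbb Z$ and columns by $b\mathbb Z$, acting by $(\mathbf M_{a,b,c}(t)\mathbf x)(\mu)=\sum_{\lambda\in b\mathbb Z}\chi_{[0,c)}(t-\mu+\lambda)\mathbf x(\lambda)$. $\mathcal B_b$ is the set of vectors $(\mathbf x(\lambda))_{\lambda\in b\mathbb Z}$ with entries in $\{0,1\}$, and $\mathcal B_b^0=\{\mathbf x\in\mathcal B_b:\mathbf x(0)=1\}$. $\mathbf 1,\mathbf 2$ denote the vectors indexed by $a\mathbb Z$ with all entries $1$, resp. $2$. $\mathcal D_{a,b,c}=\{t:\mathbf M_{a,b,c}(t)\mathbf x=\mathbf 2\text{ for some }\mathbf x\in\mathcal B_b^0\}$, $\mathcal S_{a,b,c}=\{t:\mathbf M_{a,b,c}(t)\mathbf x=\mathbf 1\text{ for some }\mathbf x\in\mathcal B_b^0\}$. With $c_0=c-\lfloor c/b\rfloor b$ and $b-a<c_0<a$, the piecewise linear maps $R_{a,b,c},\tilde R_{a,b,c}:\mathbb R\to\mathbb R$ are: $R_{a,b,c}(t)=t+\lfloor c/b\rfloor b+b$ if $t\in[0,c_0+a-b)+a\mathbb Z$, $R_{a,b,c}(t)=t$ if $t\in[c_0+a-b,c_0)+a\mathbb Z$, $R_{a,b,c}(t)=t+\lfloor c/b\rfloor b$ if $t\in[c_0,a)+a\mathbb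 Z$; $\tilde R_{a,b,c}(t)=t-\lfloor c/b\rfloor b$ if $t\in[c-a,c-c_0)+a\mathbb Z$, $\tilde R_{a,b,c}(t)=t$ if $t\in[c-c_0,c-c_0+b-a)+a\mathbb Z$, $\tilde R_{a,b,c}(t)=t-\lfloor c/b\rfloor b-b$ if $t\in[c-c_0+b-a,c)+a\mathbb Z$. Here $A+a\mathbb Z=\{x+ak:x\in A,k\in\mathbb Z\}$. *)

From Stdlib Require Import Reals Lra ZArith ClassicalEpsilon.
Open Scope R_scope.

Definition chi (c s : R) : R :=
  if Rle_dec 0 s then (if Rlt_dec s c then 1 else 0) else 0.

(* 0/1 entry of a vector x in B_b ; x k is the entry at lambda = k*b *)
Definition bit (x : Z -> bool) (k : Z) : R := if x k then 1 else 0.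

(* Symmetric partial sum over lambda = k b, k in [-N, N], of row mu = m a of
   M_{a,b,c}(t) x *)
Definition row_partial (a b c t : R) (x : Z -> bool) (m : Z) (N : nat) : R :=
  sum_f_R0 (fun i => let k := (Z.of_nat i - Z.of_nat N)%Z in
              chi c (t - IZR m * a + IZR k * b) * bit x k) (2 * N).

(* (M_{a,b,c}(t) x)(m a) = v  (the series has finitely many nonzero terms) *)
Definition row_eq (a b c t : R) (x : Z -> bool) (m : Z) (v : R) : Prop :=
  Un_cv (row_partial a b c t x m) v.

(* M_{a,b,c}(t) x = v * 1 for some x in B_b^0 *)
Definition solvable (a b c t v : R) : Prop :=
  exists x : Z -> bool, x 0%Z = true /\ forall m : Z, row_eq a b c t x m v.

Definition Dset (a b c : R) : R -> Prop := fun t => solvable a b c t 2.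
Definition Sset (a b c : R) : R -> Prop := fun t => solvable a b c t 1.

Definition nfl (b c : R) : R := IZR (Int_part (c / b)).
Definition c0 (b c : R) : R := c - nfl b c * b.

Definition in_per (a u v t : R) : Prop := exists k : Z, u <= t - IZR k * a < v.

Definition Rmap (a b c : R) (t : R) : R :=
  if excluded_middle_informative (in_per a 0 (c0 b c + a - b) t)
  then t + nfl b c * b + b
  else if excluded_middle_informative (in_per a (c0 b c + a - b) (c0 b c) t)
  then t
  else t + nfl b c * b.

Definition Rtmap (a b c : R) (t : R) : R :=
  if excluded_middle_informative (in_per a (c - a) (c - c0 b c) t)
  then t - nfl b c * b
  else if excluded_middle_informative (in_per a (c - c0 b c) (c - c0 b c + b - a) t)
  then t
  else t - nfl b c * b - b.

Definition image (f : R -> R) (E : R -> Prop) : R -> Prop :=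
  fun y => exists x, E x /\ f x = y.

Definition set_eq (A B : R -> Prop) : Prop := forall t, A t <-> B t.

(* Lebesgue outer measure: lm_le E x  <->  |E|* <= x  (x real).
   |E|* = inf of sum of lengths of countable covers of E by closed intervals. *)
Definition lm_le (E : R -> Prop) (x : R) : Prop :=
  forall eps, 0 < eps ->
    exists l r : nat -> R,
      (forall n, l n <= r n) /\
      (forall t, E t -> exists n, l n <= t <= r n) /\
      (forall N, sum_f_R0 (fun n => r n - l n) N <= x + eps).

(* equality of Lebesgue outer measures as elements of [0, +oo] *)
Definition lm_eq (A B : R -> Prop) : Prop := forall x, lm_le A x <-> lm_le B x.

Definition lmeasurable (E : R -> Prop) : Prop :=
  forall (A : R -> Prop) x y,
    lm_le (fun t => A t /\ E t) x -> lm_le (fun t => A t /\ ~ E t) y ->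
    lm_le A (x + y).

(* Row [m] of [M(t) x] sees exactly the columns [k] with [t - m a + k b] in [[0, c)], a window of
   [N = floor(c/b)] or [N + 1] consecutive columns, so it says that [x] has [v] ones there.
   Comparing rows [m] and [m + 1] (or [m - 1]) shows, according to the piece of [t] modulo [a],
   that [x] has a one at [N + 1] or [N] (resp. at [-N] or [-(N + 1)]), and that the middle pieces
   cannot occur.  Re-centring [x] at that one gives a solution at [R(t)] (resp. [R~(t)]), and on
   the remaining pieces [R] and [R~] are mutually inverse translations.  Cutting each interval of
   a cover along the periods shows that a map translating two period-pieces does not increase
   outer measure; applied to [R] and [R~], with [R~ (R t) = t], this gives equality. *)

From Stdlib Require Import Reals Lra Lia ZArith List ClassicalEpsilon.
From Stdlib Require Cantor.
Open Scope R_scope.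

Fixpoint zsum (f : Z -> R) (p : Z) (L : nat) : R :=
  match L with O => 0 | S L' => zsum f p L' + f (p + Z.of_nat L')%Z end.

Lemma zsum_Sr f p L : zsum f p (S L) = zsum f p L + f (p + Z.of_nat L)%Z.
Proof. reflexivity. Qed.

Lemma zsum_Sl f p L : zsum f p (S L) = f p + zsum f (p + 1) L.
Proof.
  induction L as [|L IH].
  - simpl. rewrite Z.add_0_r. ring.
  - rewrite zsum_Sr, IH, zsum_Sr.
    replace (p + Z.of_nat (S L))%Z with (p + 1 + Z.of_nat L)%Z by lia. ring.
Qed.

Lemma zsum_ext f g p L : (forall k, (p <= k < p + Z.of_nat L)%Z -> f k = g k) ->
  zsum f p L = zsum g p L.
Proof.
  induction L as [|L IH]; intros H; simpl; [reflexivity|].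
  rewrite IH; [f_equal; apply H; lia|intros; apply H; lia].
Qed.

Lemma zsum_shift f j p L : zsum (fun k => f (k + j)%Z) p L = zsum f (p + j) L.
Proof.
  induction L as [|L IH]; simpl; [reflexivity|]. rewrite IH; do 2 f_equal; lia.
Qed.

Lemma zsum_app f p L1 L2 :
  zsum f p (L1 + L2) = zsum f p L1 + zsum f (p + Z.of_nat L1) L2.
Proof.
  induction L2 as [|L2 IH].
  - rewrite Nat.add_0_r; simpl; ring.
  - rewrite Nat.add_succ_r, !zsum_Sr, IH.
    replace (p + Z.of_nat (L1 + L2))%Z with (p + Z.of_nat L1 + Z.of_nat L2)%Z by lia. ring.
Qed.

Lemma zsum_zero f p L : (forall k, (p <= k < p + Z.of_nat L)%Z -> f k = 0) ->
  zsum f p L = 0.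
Proof.
  intros H. rewrite (zsum_ext f (fun _ => 0)) by auto. clear H.
  induction L; simpl; lra.
Qed.

Lemma zsum_support f A K p L :
  (forall k, f k <> 0 -> (p <= k < p + Z.of_nat L)%Z) ->
  (A <= p)%Z -> (p + Z.of_nat L <= A + Z.of_nat K)%Z ->
  zsum f A K = zsum f p L.
Proof.
  intros Hs H1 H2.
  set (d1 := Z.to_nat (p - A)).
  replace K with (d1 + (L + (K - d1 - L)))%nat by (unfold d1; lia).
  rewrite !zsum_app.
  replace (A + Z.of_nat d1)%Z with p by (unfold d1; lia).
  assert (Hout : forall q M, (forall k, (q <= k < q + Z.of_nat M)%Z ->
                   ~ (p <= k < p + Z.of_nat L)%Z) -> zsum f q M = 0).
  { intros q M HqM. apply zsum_zero. intros k Hk.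
    destruct (Req_dec (f k) 0) as [e|e]; [exact e|]. now apply Hs, HqM in e. }
  rewrite (Hout A d1), (Hout (p + Z.of_nat L)%Z); [ring|intros k; unfold d1; lia..].
Qed.

Lemma zsum_limit f p L j :
  (forall k, f k <> 0 -> (p <= k < p + Z.of_nat L)%Z) ->
  Un_cv (fun N => zsum f (- Z.of_nat N + j) (S (2 * N))) (zsum f p L).
Proof.
  intros Hs eps Heps.
  exists (Z.to_nat (Z.abs p + Z.abs j + Z.of_nat L)). intros N HN.
  rewrite (zsum_support f _ _ p L) by (auto; lia).
  unfold Rdist, Rminus. rewrite Rplus_opp_r, Rabs_R0. exact Heps.
Qed.

Lemma sum_f_R0_zsum (g : Z -> R) (N K : nat) :
  sum_f_R0 (fun i => g (Z.of_nat i - Z.of_nat N)%Z) K = zsum g (- Z.of_nat N) (S K).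
Proof.
  induction K as [|K IH].
  - simpl. rewrite Rplus_0_l. f_equal. lia.
  - rewrite tech5, IH, (zsum_Sr g _ (S K)). do 2 f_equal. lia.
Qed.
Definition row_term (a b c t : R) (x : Z -> bool) (m k : Z) : R :=
  chi c (t - IZR m * a + IZR k * b) * bit x k.

Definition solution (a b c v t : R) (x : Z -> bool) : Prop :=
  x 0%Z = true /\ forall m, row_eq a b c t x m v.

Lemma bit_true x k : x k = true -> bit x k = 1.
Proof. unfold bit. now intros ->. Qed.

Lemma bit_eq1 x k : bit x k = 1 -> x k = true.
Proof. unfold bit. destruct (x k); lra. Qed.

Lemma chi_nonzero c y : chi c y <> 0 -> 0 <= y < c.
Proof. unfold chi. destruct (Rle_dec 0 y), (Rlt_dec y c); intros H; lra. Qed.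

Lemma IZR_mul_le (k q : Z) (b : R) : 0 < b -> (k <= q)%Z -> IZR k * b <= IZR q * b.
Proof. intros Hb H. apply Rmult_le_compat_r; [lra|]. now apply IZR_le. Qed.

Lemma row_partial_zsum a b c t x m N :
  row_partial a b c t x m N = zsum (row_term a b c t x m) (- Z.of_nat N + 0) (S (2 * N)).
Proof. rewrite Z.add_0_r. apply (sum_f_R0_zsum (row_term a b c t x m)). Qed.

Lemma row_term_support a b c t x m : 0 < b -> exists p L,
  forall k, row_term a b c t x m k <> 0 -> (p <= k < p + Z.of_nat L)%Z.
Proof.
  intros Hb. set (s := t - IZR m * a).
  exists (Int_part (- s / b)), (Z.to_nat (Int_part ((c - s) / b) + 1 - Int_part (- s / b))).
  intros k Hk.
  assert (Hc : 0 <= s + IZR k * b < c).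
  { apply chi_nonzero. intros e. apply Hk. unfold row_term. fold s. rewrite e. ring. }
  destruct (base_Int_part (- s / b)) as [H1 _], (base_Int_part ((c - s) / b)) as [_ H2].
  assert (E1 : - s / b <= IZR k).
  { apply (Rmult_le_reg_r b); [lra|]. replace (- s / b * b) with (- s) by (field; lra). lra. }
  assert (E2 : IZR k < (c - s) / b).
  { apply (Rmult_lt_reg_r b); [lra|]. replace ((c - s) / b * b) with (c - s) by (field; lra). lra. }
  assert (Z1 : (Int_part (- s / b) <= k)%Z) by (apply le_IZR; lra).
  assert (Z2 : (k < Int_part ((c - s) / b) + 1)%Z) by (apply lt_IZR; rewrite plus_IZR; lra).
  lia.
Qed.

Lemma row_eq_zsum a b c t x m v p L : row_eq a b c t x m v ->
  (forall k, row_term a b c t x m k <> 0 -> (p <= k < p + Z.of_nat L)%Z) ->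
  zsum (row_term a b c t x m) p L = v.
Proof.
  intros Hr Hs. apply (UL_sequence (row_partial a b c t x m)); [|exact Hr].
  apply (Un_cv_ext (fun N => zsum (row_term a b c t x m) (- Z.of_nat N + 0) (S (2 * N)))).
  - intros N. symmetry. apply row_partial_zsum.
  - now apply zsum_limit.
Qed.

Lemma solution_shift a b c v t x j : 0 < b -> solution a b c v t x -> x j = true ->
  solution a b c v (t + IZR j * b) (fun k => x (k + j)%Z).
Proof.
  intros Hb [_ Hr] Hj. split; [exact Hj|]. intros m.
  destruct (row_term_support a b c t x m Hb) as [p [L Hs]].
  unfold row_eq. rewrite <- (row_eq_zsum a b c t x m v p L (Hr m) Hs).
  apply (Un_cv_ext (fun N => zsum (row_term a b c t x m) (- Z.of_nat N + j) (S (2 * N)))).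
  - intros N. rewrite row_partial_zsum, <- zsum_shift, Z.add_0_r.
    apply zsum_ext. intros k _. unfold row_term, bit. rewrite plus_IZR. do 2 f_equal. ring.
  - now apply zsum_limit.
Qed.

Lemma solution_window_count a b c v t x m p L : 0 < b -> solution a b c v t x ->
  0 <= t - IZR m * a + IZR p * b ->
  t - IZR m * a + (IZR p - 1) * b < 0 ->
  t - IZR m * a + (IZR p + INR L - 1) * b < c ->
  c <= t - IZR m * a + (IZR p + INR L) * b ->
  zsum (bit x) p L = v.
Proof.
  intros Hb [_ Hr] H1 H2 H3 H4. set (s := t - IZR m * a) in *.
  assert (Hwin : forall k, chi c (s + IZR k * b) = if Z_le_dec p k then
             if Z_lt_le_dec k (p + Z.of_nat L) then 1 else 0 else 0).
  { intros k. rewrite INR_IZR_INZ in H3, H4. unfold chi.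
    destruct (Z_le_dec p k) as [e1|e1]; [destruct (Z_lt_le_dec k (p + Z.of_nat L)) as [e2|e2]|].
    - assert (A1 := IZR_mul_le p k b Hb e1).
      assert (A2 := IZR_mul_le k (p + Z.of_nat L - 1) b Hb ltac:(lia)).
      rewrite minus_IZR, plus_IZR in A2.
      destruct (Rle_dec 0 (s + IZR k * b)); [|lra].
      destruct (Rlt_dec (s + IZR k * b) c); [reflexivity|lra].
    - assert (A := IZR_mul_le (p + Z.of_nat L) k b Hb e2). rewrite plus_IZR in A.
      destruct (Rle_dec 0 (s + IZR k * b)); [|reflexivity].
      destruct (Rlt_dec (s + IZR k * b) c); [lra|reflexivity].
    - assert (A := IZR_mul_le k (p - 1) b Hb ltac:(lia)). rewrite minus_IZR in A.
      destruct (Rle_dec 0 (s + IZR k * b)); [lra|reflexivity]. }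
  rewrite <- (row_eq_zsum a b c t x m v p L (Hr m)).
  - apply zsum_ext. intros k Hk. unfold row_term. fold s. rewrite Hwin.
    destruct (Z_le_dec p k); [destruct (Z_lt_le_dec k (p + Z.of_nat L))|]; lia || ring.
  - intros k Hk. unfold row_term in Hk. fold s in Hk. rewrite Hwin in Hk.
    destruct (Z_le_dec p k); [destruct (Z_lt_le_dec k (p + Z.of_nat L))|];
      lia || (exfalso; apply Hk; ring).
Qed.

Fixpoint lsum {A : Type} (h : A -> R) (l : list A) : R :=
  match l with nil => 0 | a :: t => h a + lsum h t end.

Lemma lsum_app {A} (h : A -> R) l1 l2 : lsum h (l1 ++ l2) = lsum h l1 + lsum h l2.
Proof. induction l1; simpl; [ring|rewrite IHl1; ring]. Qed.

Lemma lsum_map {A B} (f : A -> B) (h : B -> R) l : lsum h (map f l) = lsum (fun x => h (f x)) l.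
Proof. induction l; simpl; [reflexivity|now rewrite IHl]. Qed.

Lemma lsum_nonneg {A} (h : A -> R) l : (forall p, 0 <= h p) -> 0 <= lsum h l.
Proof. intros H; induction l; simpl; [lra|specialize (H a); lra]. Qed.

Lemma lsum_remove {A} dec (h : A -> R) l a : (forall p, 0 <= h p) -> In a l ->
  h a + lsum h (remove dec a l) <= lsum h l.
Proof.
  intros H. induction l as [|b l IH]; simpl; [tauto|]. intros Hin.
  assert (Hle : lsum h (remove dec a l) <= lsum h l).
  { clear IH Hin. induction l as [|b' l IH']; simpl; [lra|].
    destruct (dec a b'); simpl; specialize (H b'); lra. }
  destruct (dec a b) as [->|e]; [lra|].
  simpl. destruct Hin as [->|Hin]; [congruence|]. specialize (IH Hin). lra.
Qed.

Lemma lsum_incl {A} (dec : forall x y : A, {x = y} + {x <> y}) (h : A -> R) l1 l2 :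
  (forall p, 0 <= h p) -> NoDup l1 -> incl l1 l2 -> lsum h l1 <= lsum h l2.
Proof.
  intros H Hnd. revert l2. induction Hnd as [|a l1 Hna Hnd IH]; intros l2 Hinc; simpl.
  - now apply lsum_nonneg.
  - assert (Ha : In a l2) by (apply Hinc; left; auto).
    assert (Hi : incl l1 (remove dec a l2)).
    { intros y Hy. apply in_in_remove; [intros ->; contradiction|]. apply Hinc; now right. }
    specialize (IH _ Hi). pose proof (lsum_remove dec h l2 a H Ha). lra.
Qed.

Lemma sum_f_R0_lsum (g : nat -> R) M : sum_f_R0 g M = lsum g (seq 0 (S M)).
Proof.
  induction M as [|M IH]; [simpl; ring|].
  rewrite tech5, IH, (seq_S (S M)), lsum_app. simpl. ring.
Qed.

Lemma lsum_list_prod (h : nat * nat -> R) L1 L2 :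
  lsum h (list_prod L1 L2) = lsum (fun n => lsum (fun j => h (n, j)) L2) L1.
Proof. induction L1; simpl; [reflexivity|]. now rewrite lsum_app, IHL1, lsum_map. Qed.

Lemma sum_Cantor_le (W : nat * nat -> R) (B : nat -> R) X :
  (forall p, 0 <= W p) ->
  (forall n J, sum_f_R0 (fun j => W (n, j)) J <= B n) ->
  (forall N, sum_f_R0 B N <= X) ->
  forall M, sum_f_R0 (fun q => W (Cantor.of_nat q)) M <= X.
Proof.
  intros Hnn Hin Hout M.
  rewrite sum_f_R0_lsum, <- (lsum_map Cantor.of_nat W).
  apply Rle_trans with (lsum W (list_prod (seq 0 (S M)) (seq 0 (S M)))).
  - apply lsum_incl; [decide equality; apply Nat.eq_dec|exact Hnn| |].
    + apply NoDup_map_NoDup_ForallPairs; [|apply seq_NoDup].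
      intros u v _ _ e. now rewrite <- (Cantor.cancel_to_of u), <- (Cantor.cancel_to_of v), e.
    + intros [n j] Hp. apply in_map_iff in Hp. destruct Hp as [q [Hq Hs]].
      apply in_seq in Hs. pose proof (Cantor.to_nat_non_decreasing n j) as Hc.
      rewrite <- Hq, Cantor.cancel_to_of in Hc.
      apply in_prod; apply in_seq; lia.
  - rewrite lsum_list_prod, <- sum_f_R0_lsum.
    apply Rle_trans with (sum_f_R0 B M); [|apply Hout].
    apply sum_Rle. intros n _. rewrite <- sum_f_R0_lsum. apply Hin.
Qed.

Lemma sum_f_R0_pairs (g : nat -> R) M :
  sum_f_R0 g (S (2 * M)) = sum_f_R0 (fun q => g (2 * q)%nat + g (S (2 * q))) M.
Proof.
  induction M as [|M IH]; [simpl; ring|].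
  replace (S (2 * S M)) with (S (S (S (2 * M)))) by lia.
  rewrite (tech5 g (S (S (2 * M)))), (tech5 g (S (2 * M))), IH, (tech5 _ M).
  replace (2 * S M)%nat with (S (S (2 * M))) by lia. ring.
Qed.

Lemma sum_f_R0_nonneg_mono (g : nat -> R) M M' : (forall m, 0 <= g m) -> (M <= M')%nat ->
  sum_f_R0 g M <= sum_f_R0 g M'.
Proof. intros H Hm. induction Hm; [lra|]. rewrite tech5. specialize (H (S m)). lra. Qed.

Definition overlap (l r p q : R) : R := Rmax 0 (Rmin r q - Rmax l p).

Local Ltac Rminmax_cases := repeat match goal with
  | |- context [Rmin ?x ?y] => destruct (Rle_dec x y);
       [rewrite (Rmin_left x y) by lra | rewrite (Rmin_right x y) by lra]
  | |- context [Rmax ?x ?y] =>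
       match x with context [Rmax _ _] => fail 1 | context [Rmin _ _] => fail 1 | _ =>
       match y with context [Rmax _ _] => fail 1 | context [Rmin _ _] => fail 1 | _ =>
       destruct (Rle_dec x y);
       [rewrite (Rmax_right x y) by lra | rewrite (Rmax_left x y) by lra] end end
  end.

Lemma overlap_nonneg l r p q : 0 <= overlap l r p q.
Proof. apply Rmax_l. Qed.

Lemma overlap_le l r p q : l <= r -> overlap l r p q <= r - l.
Proof. intros. unfold overlap. Rminmax_cases; lra. Qed.

Lemma overlap_add l r p q q' s' s : l <= r -> p <= q -> q <= q' -> q' <= s' -> s' <= s ->
  overlap l r p q + overlap l r q' s' <= overlap l r p s.
Proof. intros. unfold overlap. Rminmax_cases; lra. Qed.

Lemma overlap_cover l r p q t : l <= t <= r -> p <= t <= q ->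
  Rmax l p <= t <= Rmax l p + overlap l r p q.
Proof. intros. unfold overlap. Rminmax_cases; lra. Qed.

Lemma overlap_periods_sum l r B a u1 v1 u2 v2 J : l <= r -> 0 < a ->
  u1 <= v1 -> v1 <= u2 -> u2 <= v2 -> v2 <= u1 + a ->
  sum_f_R0 (fun j => overlap l r (B + INR j * a + u1) (B + INR j * a + v1)
                    + overlap l r (B + INR j * a + u2) (B + INR j * a + v2)) J
  <= overlap l r (B + u1) (B + INR J * a + u1 + a).
Proof.
  intros Hlr Ha H1 H2 H3 H4. induction J as [|J IH].
  - simpl. rewrite !Rmult_0_l, !Rplus_0_r. apply overlap_add; lra.
  - rewrite tech5, S_INR. pose proof (pos_INR J).
    assert (A : overlap l r (B + (INR J + 1) * a + u1) (B + (INR J + 1) * a + v1)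
             + overlap l r (B + (INR J + 1) * a + u2) (B + (INR J + 1) * a + v2)
             <= overlap l r (B + INR J * a + u1 + a) (B + (INR J + 1) * a + u1 + a)).
    { replace (B + INR J * a + u1 + a) with (B + (INR J + 1) * a + u1) by ring.
      apply overlap_add; lra. }
    assert (C : overlap l r (B + u1) (B + INR J * a + u1 + a)
              + overlap l r (B + INR J * a + u1 + a) (B + (INR J + 1) * a + u1 + a)
              <= overlap l r (B + u1) (B + (INR J + 1) * a + u1 + a))
      by (apply overlap_add; nra).
    lra.
Qed.

Lemma lm_le_mono (A B : R -> Prop) x : (forall t, A t -> B t) -> lm_le B x -> lm_le A x.
Proof.
  intros H HB eps He. destruct (HB eps He) as [l [r [H1 [H2 H3]]]].
  exists l, r. repeat split; auto.
Qed.

Section PiecewiseTranslation.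

Variables a u1 v1 u2 v2 al1 al2 : R.
Hypothesis Ha : 0 < a.
Hypothesis Huv1 : u1 <= v1.
Hypothesis Hvu : v1 <= u2.
Hypothesis Huv2 : u2 <= v2.
Hypothesis Hperiod : v2 <= u1 + a.

(* Each cover interval [[l n, r n]] is cut along the periods [[P + u1, P + u1 + a)] starting at
   [l n]; the cover index [n] and the period number [j] are packed by [Cantor.to_nat], the piece
   by the parity of [m]. *)
Definition period_start (l : nat -> R) (n j : nat) : R :=
  IZR (Int_part ((l n - u1) / a)) * a + INR j * a.

Definition piece_lo (l : nat -> R) (m : nat) : R :=
  let (n, j) := Cantor.of_nat (Nat.div2 m) in
  if Nat.even m then Rmax (l n) (period_start l n j + u1) + al1
  else Rmax (l n) (period_start l n j + u2) + al2.

Definition piece_len (l r : nat -> R) (m : nat) : R :=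
  let (n, j) := Cantor.of_nat (Nat.div2 m) in
  if Nat.even m then overlap (l n) (r n) (period_start l n j + u1) (period_start l n j + v1)
  else overlap (l n) (r n) (period_start l n j + u2) (period_start l n j + v2).

Lemma piece_len_nonneg l r m : 0 <= piece_len l r m.
Proof.
  unfold piece_len. destruct (Cantor.of_nat (Nat.div2 m)).
  destruct (Nat.even m); apply overlap_nonneg.
Qed.

Lemma period_start_index l n k : l n - u1 - a < IZR k * a ->
  exists j, period_start l n j = IZR k * a.
Proof.
  intros Hk. set (k0 := Int_part ((l n - u1) / a)).
  destruct (base_Int_part ((l n - u1) / a)) as [B _]. fold k0 in B.
  assert (B2 : IZR k0 * a <= l n - u1).
  { replace (l n - u1) with ((l n - u1) / a * a) by (field; lra).
    apply Rmult_le_compat_r; lra. }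
  assert (Hkk : (k0 <= k)%Z).
  { destruct (Z_le_dec k0 k) as [e|e]; [exact e|].
    assert (C := IZR_mul_le k (k0 - 1) a Ha ltac:(lia)). rewrite minus_IZR in C. lra. }
  exists (Z.to_nat (k - k0)). unfold period_start. fold k0.
  rewrite INR_IZR_INZ, Z2Nat.id, minus_IZR by lia. ring.
Qed.

Lemma piece_cover l r n t y : l n <= t <= r n ->
  (in_per a u1 v1 t /\ y = t + al1) \/ (in_per a u2 v2 t /\ y = t + al2) ->
  exists m, piece_lo l m <= y <= piece_lo l m + piece_len l r m.
Proof.
  intros Hn Hpiece.
  assert (Hk : exists k, l n - u1 - a < IZR k * a /\
             ((u1 <= t - IZR k * a < v1 /\ y = t + al1) \/
              (u2 <= t - IZR k * a < v2 /\ y = t + al2))).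
  { destruct Hpiece as [[[k Hk] Hy]|[[k Hk] Hy]]; exists k; split; lra || tauto. }
  destruct Hk as [k [Hk Hpiece']]. destruct (period_start_index l n k Hk) as [j Hj].
  destruct Hpiece' as [[Ht ->]|[Ht ->]].
  - exists (2 * Cantor.to_nat (n, j))%nat.
    unfold piece_lo, piece_len. rewrite Nat.div2_double, Nat.even_even, Cantor.cancel_of_to, Hj.
    pose proof (overlap_cover (l n) (r n) (IZR k * a + u1) (IZR k * a + v1) t Hn). lra.
  - exists (S (2 * Cantor.to_nat (n, j)))%nat.
    unfold piece_lo, piece_len. rewrite Nat.div2_succ_double, Cantor.cancel_of_to, Hj.
    replace (Nat.even (S (2 * Cantor.to_nat (n, j)))) with false
      by (rewrite Nat.even_succ, Nat.odd_mul; reflexivity).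
    pose proof (overlap_cover (l n) (r n) (IZR k * a + u2) (IZR k * a + v2) t Hn). lra.
Qed.

Lemma piece_len_sum l r X : (forall n, l n <= r n) ->
  (forall N, sum_f_R0 (fun n => r n - l n) N <= X) ->
  forall M, sum_f_R0 (piece_len l r) M <= X.
Proof.
  intros Hlr Hsum M.
  apply Rle_trans with (sum_f_R0 (piece_len l r) (S (2 * M))).
  { apply sum_f_R0_nonneg_mono; [apply piece_len_nonneg|lia]. }
  rewrite sum_f_R0_pairs.
  set (W := fun p : nat * nat =>
    overlap (l (fst p)) (r (fst p)) (period_start l (fst p) (snd p) + u1)
                                    (period_start l (fst p) (snd p) + v1)
  + overlap (l (fst p)) (r (fst p)) (period_start l (fst p) (snd p) + u2)
                                    (period_start l (fst p) (snd p) + v2)).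
  apply Rle_trans with (sum_f_R0 (fun q => W (Cantor.of_nat q)) M).
  { right. apply sum_eq. intros q _. unfold piece_len, W.
    rewrite Nat.div2_double, Nat.div2_succ_double, Nat.even_even.
    replace (Nat.even (S (2 * q))) with false
      by (rewrite Nat.even_succ, Nat.odd_mul; reflexivity).
    now destruct (Cantor.of_nat q). }
  apply (sum_Cantor_le W (fun n => r n - l n) X); [|intros n J|exact Hsum].
  - intros p. unfold W. pose proof (overlap_nonneg (l (fst p)) (r (fst p))) as H.
    pose proof (H (period_start l (fst p) (snd p) + u1) (period_start l (fst p) (snd p) + v1)).
    pose proof (H (period_start l (fst p) (snd p) + u2) (period_start l (fst p) (snd p) + v2)).
    lra.
  - unfold W, period_start. simpl fst; simpl snd.
    eapply Rle_trans; [apply overlap_periods_sum; auto|]. apply overlap_le; auto.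
Qed.

Lemma lm_le_image_piecewise_translation (f : R -> R) (F : R -> Prop) x :
  (forall t, F t -> (in_per a u1 v1 t /\ f t = t + al1) \/ (in_per a u2 v2 t /\ f t = t + al2)) ->
  lm_le F x -> lm_le (image f F) x.
Proof.
  intros Hf HF eps He. destruct (HF eps He) as [l [r [Hlr [Hcov Hsum]]]].
  exists (piece_lo l), (fun m => piece_lo l m + piece_len l r m). repeat split.
  - intros m. pose proof (piece_len_nonneg l r m). lra.
  - intros y [t [Ht <-]]. destruct (Hcov t Ht) as [n Hn].
    apply (piece_cover l r n t); [exact Hn|]. destruct (Hf t Ht) as [[? ->]|[? ->]]; auto.
  - intros M. eapply Rle_trans; [|apply (piece_len_sum l r _ Hlr Hsum M)].
    right. apply sum_eq. intros; ring.
Qed.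

End PiecewiseTranslation.

Lemma image_eq_of_inverse (f g : R -> R) (P : R -> Prop) :
  (forall t, P t -> P (f t)) -> (forall t, P t -> P (g t)) ->
  (forall t, P t -> f (g t) = t) -> set_eq (image f P) P.
Proof.
  intros Hf Hg Hfg y. split.
  - intros [t [Ht <-]]. now apply Hf.
  - intros Hy. exists (g y). auto.
Qed.

(* Only upper bounds need a proof: the reverse inequality is the bound for [g] applied to [f E]. *)
Lemma lm_eq_image_of_inverse (f g : R -> R) (P E : R -> Prop) :
  (forall A x, (forall t, A t -> P t) -> lm_le A x -> lm_le (image f A) x) ->
  (forall A x, (forall t, A t -> P t) -> lm_le A x -> lm_le (image g A) x) ->
  (forall t, P t -> P (f t)) -> (forall t, P t -> g (f t) = t) ->
  (forall t, E t -> P t) -> lm_eq (image f E) E.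
Proof.
  intros Hf Hg HPf Hgf HE x. split.
  - intros Hx. apply (lm_le_mono _ (image g (image f E))).
    + intros t Ht. exists (f t). split; [exists t; auto|auto].
    + apply Hg; [|exact Hx]. intros y [t [Ht <-]]. auto.
  - now apply Hf.
Qed.

Lemma in_per_cover a w t : 0 < a -> in_per a w (w + a) t.
Proof.
  intros Ha. exists (Int_part ((t - w) / a)).
  destruct (base_Int_part ((t - w) / a)) as [H1 H2].
  assert (E : (t - w) / a * a = t - w) by (field; lra).
  split.
  - assert (IZR (Int_part ((t - w) / a)) * a <= (t - w) / a * a)
      by (apply Rmult_le_compat_r; lra). lra.
  - assert ((t - w) / a * a < (IZR (Int_part ((t - w) / a)) + 1) * a)
      by (apply Rmult_lt_compat_r; lra). lra.
Qed.

Lemma in_per_disjoint a w u1 v1 u2 v2 t : 0 < a -> w <= u1 -> v1 <= u2 -> v2 <= w + a ->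
  in_per a u1 v1 t -> in_per a u2 v2 t -> False.
Proof.
  intros Ha H1 H2 H3 [k Hk] [k' Hk']. destruct (Z_le_dec k k') as [e|e].
  - assert (C := IZR_mul_le k k' a Ha e). lra.
  - assert (C := IZR_mul_le k' (k - 1) a Ha ltac:(lia)). rewrite minus_IZR in C. lra.
Qed.

Section Translations.

Variables a b c : R.
Hypothesis Ha : 0 < a.
Hypothesis Hab : a < b.
Hypothesis Hbc : b < c.
Hypothesis Hc0_low : b - a < c0 b c.
Hypothesis Hc0_high : c0 b c < a.

Let n := Z.to_nat (Int_part (c / b)).

Lemma Int_part_ratio : Int_part (c / b) = Z.of_nat n.
Proof.
  assert (Hgt : 1 < c / b).
  { apply (Rmult_lt_reg_r b); [lra|]. replace (c / b * b) with c by (field; lra). lra. }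
  destruct (base_Int_part (c / b)) as [_ H].
  assert (Hpos : (0 < Int_part (c / b))%Z) by (apply lt_IZR; lra). unfold n; lia.
Qed.

Lemma nfl_INR : nfl b c = INR n.
Proof. unfold nfl. now rewrite Int_part_ratio, <- INR_IZR_INZ. Qed.

Lemma c0_bounds : b - a < c - INR n * b < a.
Proof. unfold c0 in *. rewrite <- nfl_INR. lra. Qed.

(* [P1], [P2], [P3] (resp. [T1], [T2], [T3]) are the three pieces, modulo [a], in the definition
   of [Rmap] (resp. [Rtmap]). *)
Lemma Rmap_P1 t : in_per a 0 (c0 b c + a - b) t -> Rmap a b c t = t + (INR n + 1) * b.
Proof.
  intros H. unfold Rmap. rewrite nfl_INR.
  destruct (excluded_middle_informative _); [ring|contradiction].
Qed.

Lemma Rmap_P3 t : in_per a (c0 b c) a t -> Rmap a b c t = t + INR n * b.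
Proof.
  intros H. unfold Rmap. rewrite nfl_INR.
  destruct (excluded_middle_informative _) as [H'|_];
    [exfalso; eapply (in_per_disjoint a 0 _ _ _ _ t Ha); [..|exact H'|exact H]; lra|].
  destruct (excluded_middle_informative _) as [H'|_];
    [exfalso; eapply (in_per_disjoint a 0 _ _ _ _ t Ha); [..|exact H'|exact H]; lra|].
  reflexivity.
Qed.

Lemma Rtmap_T1 t : in_per a (c - a) (c - c0 b c) t -> Rtmap a b c t = t - INR n * b.
Proof.
  intros H. unfold Rtmap. rewrite nfl_INR.
  destruct (excluded_middle_informative _); [ring|contradiction].
Qed.

Lemma Rtmap_T3 t : in_per a (c - c0 b c + b - a) c t -> Rtmap a b c t = t - (INR n + 1) * b.
Proof.
  intros H. unfold Rtmap. rewrite nfl_INR.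
  destruct (excluded_middle_informative _) as [H'|_];
    [exfalso; eapply (in_per_disjoint a (c - a) _ _ _ _ t Ha); [..|exact H'|exact H]; lra|].
  destruct (excluded_middle_informative _) as [H'|_];
    [exfalso; eapply (in_per_disjoint a (c - a) _ _ _ _ t Ha); [..|exact H'|exact H]; lra|].
  ring.
Qed.

Lemma P1_to_T3 t : in_per a 0 (c0 b c + a - b) t ->
  in_per a (c - c0 b c + b - a) c (t + (INR n + 1) * b).
Proof.
  intros [k Hk]. exists (k + 1)%Z. unfold c0 in *. rewrite nfl_INR, plus_IZR in *. lra.
Qed.

Lemma P3_to_T1 t : in_per a (c0 b c) a t -> in_per a (c - a) (c - c0 b c) (t + INR n * b).
Proof.
  intros [k Hk]. exists (k + 1)%Z. unfold c0 in *. rewrite nfl_INR, plus_IZR in *. lra.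
Qed.

Lemma T1_to_P3 t : in_per a (c - a) (c - c0 b c) t -> in_per a (c0 b c) a (t - INR n * b).
Proof.
  intros [k Hk]. exists (k - 1)%Z. unfold c0 in *. rewrite nfl_INR, minus_IZR in *. lra.
Qed.

Lemma T3_to_P1 t : in_per a (c - c0 b c + b - a) c t ->
  in_per a 0 (c0 b c + a - b) (t - (INR n + 1) * b).
Proof.
  intros [k Hk]. exists (k - 1)%Z. unfold c0 in *. rewrite nfl_INR, minus_IZR in *. lra.
Qed.

Local Ltac count_row t m :=
  apply (solution_window_count a b c _ t _ m); [lra|assumption|..];
  rewrite ?opp_IZR, ?plus_IZR, ?minus_IZR, <- ?INR_IZR_INZ, ?S_INR; lra.

Local Ltac unfold_piece H := destruct H as [k Hk]; pose proof c0_bounds;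
  unfold c0 in Hk; rewrite nfl_INR in Hk.

Lemma solution_P1 v t x : solution a b c v t x -> in_per a 0 (c0 b c + a - b) t ->
  x (Z.of_nat n + 1)%Z = true.
Proof.
  intros Hs Ht. unfold_piece Ht.
  assert (A : zsum (bit x) 0 (S n) = v) by count_row t k.
  assert (B : zsum (bit x) 1 (S n) = v) by count_row t (k + 1)%Z.
  rewrite zsum_Sl, Z.add_0_l, bit_true in A by apply Hs. rewrite zsum_Sr in B.
  apply bit_eq1. rewrite Z.add_comm. lra.
Qed.

Lemma solution_not_P2 v t x : solution a b c v t x -> ~ in_per a (c0 b c + a - b) (c0 b c) t.
Proof.
  intros Hs Ht. unfold_piece Ht.
  assert (A : zsum (bit x) 0 (S n) = v) by count_row t k.
  assert (B : zsum (bit x) 1 n = v) by count_row t (k + 1)%Z.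
  rewrite zsum_Sl, Z.add_0_l, bit_true in A by apply Hs. lra.
Qed.

Lemma solution_P3 v t x : solution a b c v t x -> in_per a (c0 b c) a t ->
  x (Z.of_nat n) = true.
Proof.
  intros Hs Ht. unfold_piece Ht.
  assert (A : zsum (bit x) 0 n = v) by count_row t k.
  assert (B : zsum (bit x) 1 n = v) by count_row t (k + 1)%Z.
  destruct n as [|m]; [simpl in *; lra|].
  rewrite zsum_Sl, Z.add_0_l, bit_true in A by apply Hs. rewrite zsum_Sr in B.
  apply bit_eq1. replace (Z.of_nat (S m)) with (1 + Z.of_nat m)%Z by lia. lra.
Qed.

Lemma solution_T1 v t x : solution a b c v t x -> in_per a (c - a) (c - c0 b c) t ->
  x (- Z.of_nat n)%Z = true.
Proof.
  intros Hs Ht. unfold_piece Ht.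
  assert (A : zsum (bit x) (1 - Z.of_nat n) n = v) by count_row t k.
  assert (B : zsum (bit x) (- Z.of_nat n) n = v) by count_row t (k - 1)%Z.
  destruct n as [|m]; [simpl in *; lra|].
  rewrite zsum_Sr in A. rewrite zsum_Sl in B.
  replace (1 - Z.of_nat (S m) + Z.of_nat m)%Z with 0%Z in A by lia.
  replace (- Z.of_nat (S m) + 1)%Z with (1 - Z.of_nat (S m))%Z in B by lia.
  rewrite bit_true in A by apply Hs. apply bit_eq1. lra.
Qed.

Lemma solution_not_T2 v t x : solution a b c v t x -> ~ in_per a (c - c0 b c) (c - c0 b c + b - a) t.
Proof.
  intros Hs Ht. unfold_piece Ht.
  assert (A : zsum (bit x) (- Z.of_nat n) (S n) = v) by count_row t k.
  assert (B : zsum (bit x) (- Z.of_nat n) n = v) by count_row t (k - 1)%Z.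
  rewrite zsum_Sr, Z.add_opp_diag_l, bit_true in A by apply Hs. lra.
Qed.

Lemma solution_T3 v t x : solution a b c v t x -> in_per a (c - c0 b c + b - a) c t ->
  x (- (Z.of_nat n + 1))%Z = true.
Proof.
  intros Hs Ht. unfold_piece Ht.
  assert (A : zsum (bit x) (- Z.of_nat n) (S n) = v) by count_row t k.
  assert (B : zsum (bit x) (- (Z.of_nat n + 1)) (S n) = v) by count_row t (k - 1)%Z.
  rewrite zsum_Sr, Z.add_opp_diag_l, bit_true in A by apply Hs.
  rewrite zsum_Sl in B. replace (- (Z.of_nat n + 1) + 1)%Z with (- Z.of_nat n)%Z in B by lia.
  apply bit_eq1. lra.
Qed.

Lemma solution_Rmap_pieces v t x : solution a b c v t x ->
  (in_per a 0 (c0 b c + a - b) t /\ x (Z.of_nat n + 1)%Z = true) \/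
  (in_per a (c0 b c) a t /\ x (Z.of_nat n) = true).
Proof.
  intros Hs. destruct (in_per_cover a 0 t Ha) as [k Hk].
  destruct (Rlt_le_dec (t - IZR k * a) (c0 b c + a - b)).
  - assert (Ht : in_per a 0 (c0 b c + a - b) t) by (exists k; lra).
    left. split; [exact Ht|exact (solution_P1 _ _ _ Hs Ht)].
  - destruct (Rlt_le_dec (t - IZR k * a) (c0 b c)).
    + exfalso. apply (solution_not_P2 _ _ _ Hs). exists k; lra.
    + assert (Ht : in_per a (c0 b c) a t) by (exists k; lra).
      right. split; [exact Ht|exact (solution_P3 _ _ _ Hs Ht)].
Qed.

Lemma solution_Rtmap_pieces v t x : solution a b c v t x ->
  (in_per a (c - a) (c - c0 b c) t /\ x (- Z.of_nat n)%Z = true) \/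
  (in_per a (c - c0 b c + b - a) c t /\ x (- (Z.of_nat n + 1))%Z = true).
Proof.
  intros Hs. destruct (in_per_cover a (c - a) t Ha) as [k Hk].
  destruct (Rlt_le_dec (t - IZR k * a) (c - c0 b c)).
  - assert (Ht : in_per a (c - a) (c - c0 b c) t) by (exists k; lra).
    left. split; [exact Ht|exact (solution_T1 _ _ _ Hs Ht)].
  - destruct (Rlt_le_dec (t - IZR k * a) (c - c0 b c + b - a)).
    + exfalso. apply (solution_not_T2 _ _ _ Hs). exists k; lra.
    + assert (Ht : in_per a (c - c0 b c + b - a) c t) by (exists k; lra).
      right. split; [exact Ht|exact (solution_T3 _ _ _ Hs Ht)].
Qed.

Lemma Rtmap_Rmap_solution v t x : solution a b c v t x -> Rtmap a b c (Rmap a b c t) = t.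
Proof.
  intros Hs. destruct (solution_Rmap_pieces v t x Hs) as [[Ht _]|[Ht _]].
  - rewrite Rmap_P1, Rtmap_T3 by (auto using P1_to_T3). ring.
  - rewrite Rmap_P3, Rtmap_T1 by (auto using P3_to_T1). ring.
Qed.

Lemma Rmap_Rtmap_solution v t x : solution a b c v t x -> Rmap a b c (Rtmap a b c t) = t.
Proof.
  intros Hs. destruct (solution_Rtmap_pieces v t x Hs) as [[Ht _]|[Ht _]].
  - rewrite Rtmap_T1, Rmap_P3 by (auto using T1_to_P3). ring.
  - rewrite Rtmap_T3, Rmap_P1 by (auto using T3_to_P1). ring.
Qed.

Lemma INR_succ_IZR : INR n + 1 = IZR (Z.of_nat n + 1).
Proof. now rewrite plus_IZR, <- INR_IZR_INZ. Qed.

Lemma solvable_Rmap v t : solvable a b c t v -> solvable a b c (Rmap a b c t) v.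
Proof.
  intros [x Hs]. destruct (solution_Rmap_pieces v t x Hs) as [[Ht Hj]|[Ht Hj]].
  - rewrite Rmap_P1, INR_succ_IZR by exact Ht.
    eexists. apply solution_shift; [lra|exact Hs|exact Hj].
  - rewrite Rmap_P3, INR_IZR_INZ by exact Ht.
    eexists. apply solution_shift; [lra|exact Hs|exact Hj].
Qed.

Lemma solvable_Rtmap v t : solvable a b c t v -> solvable a b c (Rtmap a b c t) v.
Proof.
  intros [x Hs]. destruct (solution_Rtmap_pieces v t x Hs) as [[Ht Hj]|[Ht Hj]].
  - replace (Rtmap a b c t) with (t + IZR (- Z.of_nat n) * b)
      by (rewrite Rtmap_T1, opp_IZR, <- INR_IZR_INZ by exact Ht; ring).
    eexists. apply solution_shift; [lra|exact Hs|exact Hj].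
  - replace (Rtmap a b c t) with (t + IZR (- (Z.of_nat n + 1)) * b)
      by (rewrite Rtmap_T3, opp_IZR, <- INR_succ_IZR by exact Ht; ring).
    eexists. apply solution_shift; [lra|exact Hs|exact Hj].
Qed.

Lemma solvable_Rmap_Rtmap v t : solvable a b c t v ->
  Rmap a b c (Rtmap a b c t) = t /\ Rtmap a b c (Rmap a b c t) = t.
Proof.
  intros [x Hs]. split; [apply (Rmap_Rtmap_solution v t x)|apply (Rtmap_Rmap_solution v t x)];
    exact Hs.
Qed.

Lemma Rmap_image_solvable v :
  set_eq (image (Rmap a b c) (fun t => solvable a b c t v)) (fun t => solvable a b c t v).
Proof.
  apply (image_eq_of_inverse _ (Rtmap a b c)); [apply solvable_Rmap|apply solvable_Rtmap|].
  intros t Ht. now apply (solvable_Rmap_Rtmap v).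
Qed.

Lemma Rtmap_image_solvable v :
  set_eq (image (Rtmap a b c) (fun t => solvable a b c t v)) (fun t => solvable a b c t v).
Proof.
  apply (image_eq_of_inverse _ (Rmap a b c)); [apply solvable_Rtmap|apply solvable_Rmap|].
  intros t Ht. now apply (solvable_Rmap_Rtmap v).
Qed.

Lemma Rmap_lm_le v A x : (forall t, A t -> solvable a b c t v) ->
  lm_le A x -> lm_le (image (Rmap a b c) A) x.
Proof.
  intros HA. pose proof c0_bounds.
  apply (lm_le_image_piecewise_translation a 0 (c0 b c + a - b) (c0 b c) a
           ((INR n + 1) * b) (INR n * b)); try lra.
  intros t Ht. destruct (HA t Ht) as [x' Hs].
  destruct (solution_Rmap_pieces v t x' Hs) as [[Hp _]|[Hp _]]; [left|right];
    split; auto using Rmap_P1, Rmap_P3.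
Qed.

Lemma Rtmap_lm_le v A x : (forall t, A t -> solvable a b c t v) ->
  lm_le A x -> lm_le (image (Rtmap a b c) A) x.
Proof.
  intros HA. pose proof c0_bounds.
  apply (lm_le_image_piecewise_translation a (c - a) (c - c0 b c) (c - c0 b c + b - a) c
           (- (INR n * b)) (- ((INR n + 1) * b))); try lra.
  intros t Ht. destruct (HA t Ht) as [x' Hs].
  destruct (solution_Rtmap_pieces v t x' Hs) as [[Hp _]|[Hp _]]; [left|right];
    split; auto; [rewrite Rtmap_T1 | rewrite Rtmap_T3]; auto; ring.
Qed.

Lemma lm_eq_image_solvable v E : (forall t, E t -> solvable a b c t v) ->
  lm_eq (image (Rmap a b c) E) E /\ lm_eq (image (Rtmap a b c) E) E.
Proof.
  intros HE. split.
  - apply (lm_eq_image_of_inverse _ (Rtmap a b c) (fun t => solvable a b c t v));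
      [intros A x; apply Rmap_lm_le|intros A x; apply Rtmap_lm_le|apply solvable_Rmap| |exact HE].
    intros t Ht. apply (solvable_Rmap_Rtmap v t Ht).
  - apply (lm_eq_image_of_inverse _ (Rmap a b c) (fun t => solvable a b c t v));
      [intros A x; apply Rtmap_lm_le|intros A x; apply Rmap_lm_le|apply solvable_Rtmap| |exact HE].
    intros t Ht. apply (solvable_Rmap_Rtmap v t Ht).
Qed.

End Translations.

Theorem proposition3p8 (a b c : R) :
  0 < a -> a < b -> b < c ->
  b - a < c0 b c -> c0 b c < a ->
  (set_eq (image (Rmap a b c) (Dset a b c)) (Dset a b c) /\
   set_eq (image (Rtmap a b c) (Dset a b c)) (Dset a b c) /\
   set_eq (image (Rmap a b c) (Sset a b c)) (Sset a b c) /\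
   set_eq (image (Rtmap a b c) (Sset a b c)) (Sset a b c)) /\
  (forall t, Sset a b c t ->
     Rmap a b c (Rtmap a b c t) = t /\ Rtmap a b c (Rmap a b c t) = t) /\
  (forall t, Dset a b c t ->
     Rmap a b c (Rtmap a b c t) = t /\ Rtmap a b c (Rmap a b c t) = t) /\
  (forall E : R -> Prop, (forall t, E t -> Sset a b c t) -> lmeasurable E ->
     lm_eq (image (Rmap a b c) E) E /\ lm_eq (image (Rtmap a b c) E) E) /\
  (forall E : R -> Prop, (forall t, E t -> Dset a b c t) -> lmeasurable E ->
     lm_eq (image (Rmap a b c) E) E /\ lm_eq (image (Rtmap a b c) E) E).
Proof.
  intros Ha Hab Hbc Hlo Hhi. unfold Dset, Sset.
  repeat match goal with |- _ /\ _ => split end.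
  1-4: first [apply Rmap_image_solvable | apply Rtmap_image_solvable]; assumption.
  1-2: intros t Ht; eapply solvable_Rmap_Rtmap; eassumption.
  1-2: intros E HE _; eapply lm_eq_image_solvable; eassumption.
Qed.
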